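(* Let $(M^n)_{n\in\mathbb{N}}$ be a sequence of nonnegative matrices in $\mathbb{R}^{p\times q}_+$ converging (entrywise) to $M\in\mathbb{R}^{p\times q}_+$, and suppose $\operatorname{rank}_{\mathrm{psd}}(M^n)\le k$ for all $n$. Then $\operatorname{rank}_{\mathrm{psd}}(M)\le k$.
   Context: $\mathcal{S}^k_+$ denotes the cone of $k\times k$ real symmetric positive semidefinite matrices, with inner product $\langle A,B\rangle = \operatorname{trace}(AB)$. A psd factorization of size $k$ of a nonnegative matrix $M\in\mathbb{R}^{p\times q}_+$ is a collection $A_1,\dots,A_p, B_1,\dots,B_q \in \mathcal{S}^k_+$ with $M_{ij} = \langle A_i, B_j\rangle$ for all $i,j$; the psd rank $\operatorname{rank}_{\mathrm{psd}}(M)$ is the smallest $k$ for which such a factorization exists. *)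

From Stdlib Require Import Reals.
Open Scope R_scope.

Fixpoint sumR (n : nat) (f : nat -> R) : R :=
  match n with
  | O => 0
  | S m => sumR m f + f m
  end.

(* A (real) matrix is a function of row/column indices; only the indices
   below the relevant dimensions matter. *)
Definition Mat := nat -> nat -> R.

Definition is_psd (k : nat) (A : Mat) : Prop :=
  (forall i j, (i < k)%nat -> (j < k)%nat -> A i j = A j i) /\
  (forall x : nat -> R,
      0 <= sumR k (fun i => sumR k (fun j => x i * A i j * x j))).

Definition tr_inner (k : nat) (A B : Mat) : R :=
  sumR k (fun i => sumR k (fun j => A i j * B j i)).

Definition nonneg_mat (p q : nat) (M : Mat) : Prop :=
  forall i j, (i < p)%nat -> (j < q)%nat -> 0 <= M i j.

Definition has_psd_factorization (p q k : nat) (M : Mat) : Prop :=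
  exists (A B : nat -> Mat),
    (forall i, (i < p)%nat -> is_psd k (A i)) /\
    (forall j, (j < q)%nat -> is_psd k (B j)) /\
    (forall i j, (i < p)%nat -> (j < q)%nat -> M i j = tr_inner k (A i) (B j)).

Definition is_psd_rank (p q : nat) (M : Mat) (r : nat) : Prop :=
  has_psd_factorization p q r M /\
  (forall k, has_psd_factorization p q k M -> (r <= k)%nat).

(* After zero-padding, every [M^n] has a psd factorization of size exactly [k].
   A congruence [A_i -> T^t A_i T], [B_j -> S B_j S^t] with [T S = I] keeps the
   factorization, and symmetric Gaussian elimination on the psd matrix [sum_i A_i]
   makes it a diagonal 0/1 matrix; the factors can then be chosen with
   [|A_i| <= 1] and [|B_j| <= sum_i M_ij] entrywise.  These bounds are uniform
   in [n] because [M^n] converges, so by Bolzano-Weierstrass a subsequence of the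
   factors converges, and the limits factor [M]: the psd cone is closed and the
   trace pairing is continuous. *)

From Stdlib Require Import Reals Lra Lia List ClassicalEpsilon FunctionalExtensionality Wf_nat.
Open Scope R_scope.

Lemma sumR_ext n f g : (forall i, (i < n)%nat -> f i = g i) -> sumR n f = sumR n g.
Proof.
  induction n as [|n IH]; simpl; intros H; [reflexivity|].
  rewrite IH by (intros; apply H; lia). rewrite H by lia; reflexivity.
Qed.

Lemma sumR_add n f g : sumR n (fun i => f i + g i) = sumR n f + sumR n g.
Proof. induction n as [|n IH]; simpl; [lra|]. rewrite IH; ring. Qed.

Lemma sumR_mult_l n c f : sumR n (fun i => c * f i) = c * sumR n f.
Proof. induction n as [|n IH]; simpl; [ring|]. rewrite IH; ring. Qed.

Lemma sumR_mult_r n c f : sumR n (fun i => f i * c) = sumR n f * c.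
Proof. induction n as [|n IH]; simpl; [ring|]. rewrite IH; ring. Qed.

Lemma sumR_zero n : sumR n (fun _ => 0) = 0.
Proof. induction n as [|n IH]; simpl; [reflexivity|]. rewrite IH; ring. Qed.

Lemma sumR_comm n m (f : nat -> nat -> R) :
  sumR n (fun i => sumR m (fun j => f i j)) = sumR m (fun j => sumR n (fun i => f i j)).
Proof.
  induction n as [|n IH]; simpl.
  - symmetry; apply sumR_zero.
  - rewrite IH, <- sumR_add; reflexivity.
Qed.

Lemma sumR_nonneg n f : (forall i, (i < n)%nat -> 0 <= f i) -> 0 <= sumR n f.
Proof.
  induction n as [|n IH]; simpl; intros H; [lra|].
  assert (0 <= f n) by (apply H; lia).
  assert (0 <= sumR n f) by (apply IH; intros; apply H; lia).
  lra.
Qed.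

Lemma sumR_term_le n f a :
  (forall i, (i < n)%nat -> 0 <= f i) -> (a < n)%nat -> f a <= sumR n f.
Proof.
  induction n as [|n IH]; simpl; intros H Ha; [lia|].
  assert (0 <= f n) by (apply H; lia).
  destruct (Nat.eq_dec a n) as [->|Hne].
  - assert (0 <= sumR n f) by (apply sumR_nonneg; intros; apply H; lia). lra.
  - assert (f a <= sumR n f) by (apply IH; [intros; apply H|]; lia). lra.
Qed.

Lemma sumR_trunc r n f :
  (r <= n)%nat -> (forall i, (r <= i < n)%nat -> f i = 0) -> sumR n f = sumR r f.
Proof.
  induction n as [|n IH]; intros Hr H.
  - replace r with 0%nat by lia; reflexivity.
  - destruct (Nat.eq_dec r (S n)) as [->|Hne]; [reflexivity|].
    simpl; rewrite IH, (H n) by (try intros; try apply H; lia); ring.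
Qed.

Lemma sumR_trunc2 r n (f : nat -> nat -> R) : (r <= n)%nat ->
  (forall a b, (a < n)%nat -> (b < n)%nat -> (r <= a \/ r <= b)%nat -> f a b = 0) ->
  sumR n (fun a => sumR n (fun b => f a b)) = sumR r (fun a => sumR r (fun b => f a b)).
Proof.
  intros Hr H. rewrite (sumR_trunc r n).
  - apply sumR_ext; intros; apply sumR_trunc; auto. intros; apply H; lia.
  - exact Hr.
  - intros i Hi. rewrite (sumR_ext _ _ (fun _ => 0)) by (intros; apply H; lia).
    apply sumR_zero.
Qed.

Definition kron (i j : nat) : R := if Nat.eqb i j then 1 else 0.

Lemma kron_refl i : kron i i = 1.
Proof. unfold kron; rewrite Nat.eqb_refl; reflexivity. Qed.

Lemma kron_neq i j : i <> j -> kron i j = 0.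
Proof. intros; unfold kron; destruct (Nat.eqb_spec i j); [lia|reflexivity]. Qed.

Lemma kron_sym i j : kron i j = kron j i.
Proof. unfold kron; rewrite Nat.eqb_sym; reflexivity. Qed.

Lemma sumR_kron n a f : (a < n)%nat -> sumR n (fun i => kron i a * f i) = f a.
Proof.
  induction n as [|n IH]; intros Ha; [lia|]. simpl.
  destruct (Nat.eq_dec a n) as [->|Hne].
  - rewrite kron_refl, (sumR_ext _ _ (fun _ => 0)), sumR_zero; [ring|].
    intros; rewrite kron_neq by lia; ring.
  - rewrite IH, kron_neq by lia; ring.
Qed.

Lemma sumR_kron_pair n a b s t f : (a < n)%nat -> (b < n)%nat ->
  sumR n (fun i => (s * kron i a + t * kron i b) * f i) = s * f a + t * f b.
Proof.
  intros Ha Hb.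
  rewrite (sumR_ext _ _ (fun i => kron i a * (s * f i) + kron i b * (t * f i)))
    by (intros; ring).
  rewrite sumR_add, !sumR_kron by assumption; reflexivity.
Qed.
Definition mm (k : nat) (A B : Mat) : Mat := fun i j => sumR k (fun l => A i l * B l j).
Definition tp (A : Mat) : Mat := fun i j => A j i.
Definition cong (k : nat) (T A : Mat) : Mat := mm k (mm k (tp T) A) T.
Definition colv (x : nat -> R) : Mat := fun i _ => x i.
Definition mv (k : nat) (T : Mat) (x : nat -> R) : nat -> R :=
  fun a => sumR k (fun b => T a b * x b).
Definition qf (k : nat) (A : Mat) (x : nat -> R) : R :=
  sumR k (fun i => sumR k (fun j => x i * A i j * x j)).

Definition is_right_inverse (k : nat) (T S : Mat) : Prop :=
  forall a b, (a < k)%nat -> (b < k)%nat -> mm k T S a b = kron a b.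

Lemma mm_assoc k A B C : mm k (mm k A B) C = mm k A (mm k B C).
Proof.
  apply functional_extensionality; intro i; apply functional_extensionality; intro j.
  unfold mm.
  rewrite (sumR_ext _ _ (fun l => sumR k (fun m => A i m * B m l * C l j)))
    by (intros; rewrite <- sumR_mult_r; reflexivity).
  rewrite sumR_comm. apply sumR_ext; intros.
  rewrite <- sumR_mult_l. apply sumR_ext; intros; ring.
Qed.

Lemma mm_tp k A B i j : mm k (tp B) (tp A) i j = mm k A B j i.
Proof. unfold mm, tp. apply sumR_ext; intros; ring. Qed.

Lemma mm_right_inverse_l k T S X i j : is_right_inverse k T S -> (i < k)%nat ->
  mm k (mm k T S) X i j = X i j.
Proof.
  intros HTS Hi. unfold mm at 1.
  rewrite <- (sumR_kron k i (fun l => X l j)) by exact Hi.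
  apply sumR_ext; intros. rewrite HTS, kron_sym by assumption; reflexivity.
Qed.

Lemma is_right_inverse_tp k T S : is_right_inverse k T S -> is_right_inverse k (tp S) (tp T).
Proof. intros HTS a b Ha Hb. rewrite mm_tp, HTS, kron_sym by assumption; reflexivity. Qed.

Lemma tr_inner_comm k A B : tr_inner k A B = tr_inner k B A.
Proof.
  unfold tr_inner. rewrite sumR_comm.
  apply sumR_ext; intros; apply sumR_ext; intros; ring.
Qed.

Lemma tr_inner_mm_assoc k A B C : tr_inner k (mm k A B) C = tr_inner k A (mm k B C).
Proof.
  unfold tr_inner, mm. apply sumR_ext; intros i _.
  rewrite (sumR_ext _ _ (fun j => sumR k (fun l => A i l * B l j * C j i)))
    by (intros; rewrite <- sumR_mult_r; reflexivity).
  rewrite sumR_comm. apply sumR_ext; intros.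
  rewrite <- sumR_mult_l. apply sumR_ext; intros; ring.
Qed.

Lemma tr_inner_ext_r k A B B' :
  (forall i j, (i < k)%nat -> (j < k)%nat -> B i j = B' i j) ->
  tr_inner k A B = tr_inner k A B'.
Proof.
  intros H. unfold tr_inner.
  apply sumR_ext; intros; apply sumR_ext; intros. rewrite H by assumption; reflexivity.
Qed.

(* With [T S = I]: tr((T^t A T)(S B S^t)) = tr(A (T S) B (S^t T^t)) = tr(A B). *)
Lemma tr_inner_cong k T S A B : is_right_inverse k T S ->
  tr_inner k (cong k T A) (cong k (tp S) B) = tr_inner k A B.
Proof.
  intros HTS. unfold cong.
  rewrite tr_inner_mm_assoc, (mm_assoc k S B), <- (mm_assoc k T S).
  rewrite (tr_inner_ext_r _ _ _ (mm k B (tp S)))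
    by (intros; apply mm_right_inverse_l; assumption).
  rewrite tr_inner_comm, tr_inner_mm_assoc, <- mm_assoc.
  rewrite (tr_inner_ext_r _ _ _ A)
    by (intros; apply mm_right_inverse_l; [apply is_right_inverse_tp|]; assumption).
  apply tr_inner_comm.
Qed.

Lemma cong_expand k T X a b :
  cong k T X a b = sumR k (fun x => sumR k (fun y => T x a * X x y * T y b)).
Proof.
  unfold cong, mm, tp. rewrite sumR_comm. apply sumR_ext; intros.
  rewrite <- sumR_mult_r; reflexivity.
Qed.

Lemma qf_as_mm k A x : qf k A x = mm k (mm k (tp (colv x)) A) (colv x) 0%nat 0%nat.
Proof.
  unfold qf, mm, tp, colv. rewrite sumR_comm. apply sumR_ext; intros.
  rewrite <- sumR_mult_r. apply sumR_ext; intros; ring.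
Qed.

Lemma qf_cong k T A x : qf k (cong k T A) x = qf k A (mv k T x).
Proof.
  rewrite !qf_as_mm. unfold cong.
  replace (tp (colv (mv k T x))) with (mm k (tp (colv x)) (tp T))
    by (do 2 (apply functional_extensionality; intro);
        unfold mm, tp, colv, mv; apply sumR_ext; intros; ring).
  replace (colv (mv k T x)) with (mm k T (colv x)) by reflexivity.
  rewrite !mm_assoc; reflexivity.
Qed.

Lemma psd_cong k T A : is_psd k A -> is_psd k (cong k T A).
Proof.
  intros [Hs Hq]. split.
  - intros i j Hi Hj. rewrite !cong_expand, sumR_comm.
    apply sumR_ext; intros; apply sumR_ext; intros. rewrite Hs by assumption; ring.
  - intros x. fold (qf k (cong k T A) x). rewrite qf_cong. apply Hq.
Qed.

Lemma qf_kron_pair k A a b s t : (a < k)%nat -> (b < k)%nat ->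
  qf k A (fun i => s * kron i a + t * kron i b) =
  s * (s * A a a + t * A a b) + t * (s * A b a + t * A b b).
Proof.
  intros Ha Hb. unfold qf.
  rewrite (sumR_ext _ _ (fun i => (s * kron i a + t * kron i b) * (s * A i a + t * A i b))).
  { apply sumR_kron_pair; assumption. }
  intros i _.
  rewrite <- (sumR_kron_pair k a b s t (fun j => A i j)) by assumption.
  rewrite <- sumR_mult_l. apply sumR_ext; intros; ring.
Qed.

Lemma psd_qf_kron_pair k A a b s t : is_psd k A -> (a < k)%nat -> (b < k)%nat ->
  0 <= s * (s * A a a + t * A a b) + t * (s * A a b + t * A b b).
Proof.
  intros [Hs Hq] Ha Hb. rewrite (Hs a b) at 2 by assumption.
  rewrite <- (qf_kron_pair k) by assumption. apply Hq.
Qed.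

Lemma psd_diag_nonneg k A a : is_psd k A -> (a < k)%nat -> 0 <= A a a.
Proof. intros HA Ha. pose proof (psd_qf_kron_pair k A a a 1 0 HA Ha Ha). lra. Qed.

Lemma psd_offdiag_le k A a b : is_psd k A -> (a < k)%nat -> (b < k)%nat ->
  2 * Rabs (A a b) <= A a a + A b b.
Proof.
  intros HA Ha Hb.
  pose proof (psd_qf_kron_pair k A a b 1 1 HA Ha Hb).
  pose proof (psd_qf_kron_pair k A a b 1 (-1) HA Ha Hb).
  unfold Rabs; destruct (Rcase_abs (A a b)); lra.
Qed.

Lemma psd_entry_le k A a b C : is_psd k A -> (a < k)%nat -> (b < k)%nat ->
  A a a <= C -> A b b <= C -> Rabs (A a b) <= C.
Proof. intros HA Ha Hb HCa HCb. pose proof (psd_offdiag_le k A a b HA Ha Hb). lra. Qed.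

Lemma psd_diag0_row0 k A a b : is_psd k A -> (a < k)%nat -> (b < k)%nat ->
  A a a = 0 -> A a b = 0.
Proof.
  intros HA Ha Hb H0. destruct (Req_dec (A a b) 0) as [|Hne]; [assumption|exfalso].
  (* the quadratic form at t e_a + e_b is 2 t A_ab + A_bb, which is negative for this t *)
  set (t := - (A b b + 1) / (2 * A a b)).
  pose proof (psd_qf_kron_pair k A a b t 1 HA Ha Hb) as Hq.
  assert (Ht : t * A a b = - (A b b + 1) / 2) by (unfold t; field; assumption).
  rewrite H0 in Hq. nra.
Qed.

Definition is_psd_factorization (p q k : nat) (M : Mat) (A B : nat -> Mat) : Prop :=
  (forall i, (i < p)%nat -> is_psd k (A i)) /\
  (forall j, (j < q)%nat -> is_psd k (B j)) /\
  (forall i j, (i < p)%nat -> (j < q)%nat -> M i j = tr_inner k (A i) (B j)).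

Lemma is_psd_factorization_cong p q k M A B T S : is_right_inverse k T S ->
  is_psd_factorization p q k M A B ->
  is_psd_factorization p q k M (fun i => cong k T (A i)) (fun j => cong k (tp S) (B j)).
Proof.
  intros HTS [HA [HB HM]]. split; [|split].
  - intros; apply psd_cong; auto.
  - intros; apply psd_cong; auto.
  - intros; rewrite tr_inner_cong; auto.
Qed.

Definition msum (p : nat) (A : nat -> Mat) : Mat := fun a b => sumR p (fun i => A i a b).

Lemma msum_cong p k T A : msum p (fun i => cong k T (A i)) = cong k T (msum p A).
Proof.
  apply functional_extensionality; intro a; apply functional_extensionality; intro b.
  unfold msum. rewrite cong_expand.
  rewrite (sumR_ext _ _ (fun i => sumR k (fun x => sumR k (fun y => T x a * A i x y * T y b))))
    by (intros; apply cong_expand).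
  rewrite sumR_comm. apply sumR_ext; intros. rewrite sumR_comm. apply sumR_ext; intros.
  rewrite <- sumR_mult_l, <- sumR_mult_r. apply sumR_ext; intros; ring.
Qed.

Lemma psd_msum p k A : (forall i, (i < p)%nat -> is_psd k (A i)) -> is_psd k (msum p A).
Proof.
  intros H. split.
  - intros a b Ha Hb. apply sumR_ext; intros i Hi. apply (H i Hi); assumption.
  - intros x. unfold msum.
    rewrite (sumR_ext _ _ (fun a => sumR p (fun i => sumR k (fun b => x a * A i a b * x b)))).
    + rewrite sumR_comm. apply sumR_nonneg. intros i Hi. apply (H i Hi).
    + intros. rewrite sumR_comm. apply sumR_ext; intros.
      rewrite <- sumR_mult_l, <- sumR_mult_r; reflexivity.
Qed.

Lemma tr_inner_msum p k A Y : sumR p (fun i => tr_inner k (A i) Y) = tr_inner k (msum p A) Y.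
Proof.
  unfold tr_inner, msum. rewrite sumR_comm. apply sumR_ext; intros.
  rewrite sumR_comm. apply sumR_ext; intros. rewrite sumR_mult_r; reflexivity.
Qed.

Lemma tr_inner_diag k W Y :
  (forall a b, (a < k)%nat -> (b < k)%nat -> a <> b -> W a b = 0) ->
  tr_inner k W Y = sumR k (fun a => W a a * Y a a).
Proof.
  intros H. unfold tr_inner. apply sumR_ext; intros a Ha.
  rewrite <- (sumR_kron k a (fun b => W a b * Y b a)) by exact Ha.
  apply sumR_ext; intros b Hb. destruct (Nat.eq_dec b a) as [->|Hne].
  - rewrite kron_refl; ring.
  - rewrite kron_neq, H by auto; ring.
Qed.

Definition diagm (d : nat -> R) : Mat := fun a b => kron a b * d b.

Lemma is_right_inverse_diagm k d e :
  (forall a, d a * e a = 1) -> is_right_inverse k (diagm d) (diagm e).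
Proof.
  intros Hde a b Ha Hb. unfold mm, diagm.
  rewrite (sumR_ext _ _ (fun l => kron l a * (d l * (kron l b * e b))))
    by (intros; rewrite kron_sym; ring).
  rewrite sumR_kron by exact Ha.
  destruct (Nat.eq_dec a b) as [->|Hne].
  - rewrite kron_refl. transitivity (d b * e b); [ring|apply Hde].
  - rewrite kron_neq by exact Hne; ring.
Qed.

Lemma cong_diagm k d X a b : (a < k)%nat -> (b < k)%nat ->
  cong k (diagm d) X a b = d a * X a b * d b.
Proof.
  intros Ha Hb. rewrite cong_expand. unfold diagm.
  rewrite (sumR_ext _ _ (fun x => kron x a * (d a * X x b * d b))).
  { apply sumR_kron; exact Ha. }
  intros x _.
  rewrite (sumR_ext _ _ (fun y => kron y b * (kron x a * d a * X x y * d b)))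
    by (intros; ring).
  rewrite sumR_kron by exact Hb; ring.
Qed.

Definition elem (m : nat) (u : nat -> R) : Mat := fun a b => kron a b + kron a m * u b.

Lemma is_right_inverse_elem k m u : (m < k)%nat -> u m = 0 ->
  is_right_inverse k (elem m u) (elem m (fun b => - u b)).
Proof.
  intros Hm Hu a b Ha Hb. unfold mm, elem.
  rewrite (sumR_ext _ _ (fun l => (1 * kron l b + (- u b) * kron l m) * (kron a l + kron a m * u l)))
    by (intros; ring).
  rewrite sumR_kron_pair, Hu, kron_sym by assumption. ring.
Qed.

Lemma cong_elem k m u X a b : (a < k)%nat -> (b < k)%nat -> (m < k)%nat ->
  cong k (elem m u) X a b = X a b + u b * X a m + u a * X m b + u a * u b * X m m.
Proof.
  intros Ha Hb Hm. rewrite cong_expand. unfold elem.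
  rewrite (sumR_ext _ _ (fun x => (1 * kron x a + u a * kron x m) * (X x b + u b * X x m))).
  { rewrite sumR_kron_pair by assumption. ring. }
  intros x _.
  rewrite (sumR_ext _ _ (fun y => (1 * kron y b + u b * kron y m)
                                  * ((1 * kron x a + u a * kron x m) * X x y)))
    by (intros; ring).
  rewrite sumR_kron_pair by assumption; ring.
Qed.

Definition unit_row (k : nat) (W : Mat) (a : nat) : Prop :=
  (forall b, (b < k)%nat -> b <> a -> W a b = 0) /\ (W a a = 0 \/ W a a = 1).

Definition rows_reduced (k m : nat) (W : Mat) : Prop :=
  forall a, (a < m)%nat -> unit_row k W a.

Lemma rows_reduced_S k m W : rows_reduced k m W -> unit_row k W m -> rows_reduced k (S m) W.
Proof.
  intros Hred Hm a Ha. destruct (Nat.eq_dec a m) as [->|Hne]; [exact Hm|].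
  apply Hred; lia.
Qed.

Lemma unit_row_diag0 k W m : is_psd k W -> (m < k)%nat -> W m m = 0 -> unit_row k W m.
Proof.
  intros HW Hm H0. split; [|left; exact H0].
  intros; apply psd_diag0_row0 with k; assumption.
Qed.

Definition pivot_coeffs (W : Mat) (m : nat) : nat -> R :=
  fun b => if Nat.eqb b m then 0 else - W m b / W m m.

Section Pivot.
Variables (k m : nat) (W : Mat).
Hypotheses (Hm : (m < k)%nat) (HW : is_psd k W) (Hred : rows_reduced k m W)
  (Hpiv : W m m <> 0).

Let u := pivot_coeffs W m.

Lemma pivot_coeffs_pivot : u m = 0.
Proof. unfold u, pivot_coeffs; rewrite Nat.eqb_refl; reflexivity. Qed.

Lemma pivot_coeffs_reduced a : (a < m)%nat -> u a = 0.
Proof.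
  intros Ha. unfold u, pivot_coeffs. destruct (Nat.eqb_spec a m); [reflexivity|].
  destruct HW as [Hs _]. rewrite Hs, (proj1 (Hred a Ha) m) by lia.
  field; exact Hpiv.
Qed.

Lemma cong_elem_pivot_reduced : rows_reduced k m (cong k (elem m u) W).
Proof.
  intros a Ha. pose proof (Hred a Ha) as [Hrow Hdiag].
  assert (Hu : u a = 0) by (apply pivot_coeffs_reduced; exact Ha).
  assert (HWam : W a m = 0) by (apply Hrow; lia).
  split.
  - intros b Hb Hne. rewrite cong_elem, Hu, HWam, Hrow by lia. ring.
  - replace (cong k (elem m u) W a a) with (W a a); [exact Hdiag|].
    rewrite cong_elem, Hu, HWam by lia; ring.
Qed.

Lemma cong_elem_pivot_row b : (b < k)%nat -> b <> m -> cong k (elem m u) W m b = 0.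
Proof.
  intros Hb Hne. rewrite cong_elem, pivot_coeffs_pivot by assumption.
  unfold u, pivot_coeffs. destruct (Nat.eqb_spec b m); [contradiction|].
  field; exact Hpiv.
Qed.

Lemma cong_elem_pivot_diag : cong k (elem m u) W m m = W m m.
Proof. rewrite cong_elem, pivot_coeffs_pivot by assumption; ring. Qed.

End Pivot.

Definition pivot_scale (m : nat) (c : R) : nat -> R :=
  fun a => if Nat.eqb a m then / sqrt c else 1.

Lemma pivot_scale_neq0 m c a : 0 < c -> pivot_scale m c a <> 0.
Proof.
  intros Hc. unfold pivot_scale. destruct (Nat.eqb a m); [|lra].
  apply Rinv_neq_0_compat. apply Rgt_not_eq, sqrt_lt_R0, Hc.
Qed.

Lemma cong_pivot_scale_reduced k m W c : (m < k)%nat -> rows_reduced k m W ->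
  (forall b, (b < k)%nat -> b <> m -> W m b = 0) -> W m m = c -> 0 < c ->
  rows_reduced k (S m) (cong k (diagm (pivot_scale m c)) W).
Proof.
  intros Hm Hred Hrow Hc Hpos.
  assert (Hd : forall a, a <> m -> pivot_scale m c a = 1).
  { intros a Ha. unfold pivot_scale. destruct (Nat.eqb_spec a m); [contradiction|reflexivity]. }
  apply rows_reduced_S.
  - intros a Ha. pose proof (Hred a Ha) as [Hrow' Hdiag]. split.
    + intros b Hb Hne. rewrite cong_diagm, Hrow' by lia; ring.
    + replace (cong k (diagm (pivot_scale m c)) W a a) with (W a a); [exact Hdiag|].
      rewrite cong_diagm, Hd by lia; ring.
  - split.
    + intros b Hb Hne. rewrite cong_diagm, Hrow by lia; ring.
    + right. rewrite cong_diagm, Hc by lia. unfold pivot_scale. rewrite Nat.eqb_refl.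
      assert (Hsq : sqrt c * sqrt c = c) by (apply sqrt_sqrt; lra).
      assert (0 < sqrt c) by (apply sqrt_lt_R0; exact Hpos).
      transitivity (c / (sqrt c * sqrt c)); [field; lra|rewrite Hsq; field; lra].
Qed.

Lemma reduce_step p q k M A B m : (m < k)%nat -> is_psd_factorization p q k M A B ->
  rows_reduced k m (msum p A) ->
  exists A' B', is_psd_factorization p q k M A' B' /\ rows_reduced k (S m) (msum p A').
Proof.
  intros Hm Hf Hred. set (W := msum p A) in Hred.
  assert (HW : is_psd k W) by (apply psd_msum, Hf).
  destruct (Req_dec (W m m) 0) as [H0|Hpiv].
  { exists A, B. split; [exact Hf|]. apply rows_reduced_S; [exact Hred|].
    apply unit_row_diag0; assumption. }
  set (u := pivot_coeffs W m).
  set (c := W m m).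
  assert (Hc : 0 < c) by (pose proof (psd_diag_nonneg k W m HW Hm); unfold c; lra).
  set (d := pivot_scale m c).
  exists (fun i => cong k (diagm d) (cong k (elem m u) (A i))),
         (fun j => cong k (tp (diagm (fun a => / d a)))
                          (cong k (tp (elem m (fun b => - u b))) (B j))).
  split.
  - apply is_psd_factorization_cong.
    + apply is_right_inverse_diagm. intros; apply Rinv_r, pivot_scale_neq0, Hc.
    + apply is_psd_factorization_cong; [|exact Hf].
      apply is_right_inverse_elem; [exact Hm|apply pivot_coeffs_pivot].
  - rewrite !msum_cong. fold W.
    apply cong_pivot_scale_reduced; try assumption.
    + apply cong_elem_pivot_reduced; assumption.
    + apply cong_elem_pivot_row; assumption.
    + apply cong_elem_pivot_diag; assumption.
Qed.

Lemma reduce p q k M A B m : (m <= k)%nat -> is_psd_factorization p q k M A B ->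
  exists A' B', is_psd_factorization p q k M A' B' /\ rows_reduced k m (msum p A').
Proof.
  induction m as [|m IH]; intros Hm Hf.
  - exists A, B. split; [exact Hf|]. intros a Ha; lia.
  - destruct IH as [A1 [B1 [Hf1 Hred]]]; [lia|exact Hf|].
    apply reduce_step with A1 B1; [lia|exact Hf1|exact Hred].
Qed.

Definition bounded_psd_factorization (p q k : nat) (M : Mat) (A B : nat -> Mat) : Prop :=
  is_psd_factorization p q k M A B /\
  (forall i a b, (i < p)%nat -> (a < k)%nat -> (b < k)%nat -> Rabs (A i a b) <= 1) /\
  (forall j a b, (j < q)%nat -> (a < k)%nat -> (b < k)%nat ->
     Rabs (B j a b) <= sumR p (fun i => M i j)).

Lemma psd_diag_le_msum p k A i a : (forall i, (i < p)%nat -> is_psd k (A i)) ->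
  (i < p)%nat -> (a < k)%nat -> A i a a <= msum p A a a.
Proof.
  intros HA Hi Ha. apply (sumR_term_le p (fun i => A i a a)); [|exact Hi].
  intros; apply psd_diag_nonneg with k; auto.
Qed.

Lemma psd_msum_support p k A i a b : (forall i, (i < p)%nat -> is_psd k (A i)) ->
  (i < p)%nat -> (a < k)%nat -> (b < k)%nat ->
  msum p A a a = 0 \/ msum p A a a = 1 -> msum p A b b = 0 \/ msum p A b b = 1 ->
  A i a b = msum p A a a * A i a b * msum p A b b.
Proof.
  intros HA Hi Ha Hb Hwa Hwb.
  assert (H0 : forall c, (c < k)%nat -> msum p A c c = 0 -> A i c c = 0).
  { intros c Hc Hwc. pose proof (psd_diag_le_msum p k A i c HA Hi Hc).
    pose proof (psd_diag_nonneg k (A i) c (HA i Hi) Hc). lra. }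
  destruct Hwa as [Ea|Ea].
  - rewrite (psd_diag0_row0 k (A i) a b), Ea by auto; ring.
  - destruct Hwb as [Eb|Eb]; rewrite Ea, Eb; [|ring].
    destruct (HA i Hi) as [Hs _].
    rewrite Hs, (psd_diag0_row0 k (A i) b a) by auto; ring.
Qed.

(* Once [msum A] is a diagonal 0/1 matrix [diag w], every [A i] is supported on the
   coordinates where [w = 1]; hence [B j] may be replaced by [diag w B j diag w], whose
   trace is the column sum of [M], and both families become uniformly bounded. *)
Lemma exists_bounded_psd_factorization p q k M A B : is_psd_factorization p q k M A B ->
  exists A' B', bounded_psd_factorization p q k M A' B'.
Proof.
  intros Hf. destruct (reduce p q k M A B k (le_n k) Hf) as [A1 [B1 [Hf1 Hred]]].
  pose proof Hf1 as [HA [HB HM]].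
  set (w := fun a => msum p A1 a a).
  assert (Hw : forall a, (a < k)%nat -> w a = 0 \/ w a = 1) by (intros a Ha; apply (Hred a Ha)).
  assert (Hoff : forall a b, (a < k)%nat -> (b < k)%nat -> a <> b -> msum p A1 a b = 0)
    by (intros a b Ha Hb Hne; apply (Hred a Ha); auto).
  assert (Hsupp : forall i a b, (i < p)%nat -> (a < k)%nat -> (b < k)%nat ->
            A1 i a b = w a * A1 i a b * w b)
    by (intros; apply (psd_msum_support p k); auto; apply Hw; assumption).
  set (B' := fun j => cong k (diagm w) (B1 j)).
  assert (HB' : forall j, (j < q)%nat -> is_psd k (B' j)) by (intros; apply psd_cong; auto).
  assert (HM' : forall i j, (i < p)%nat -> (j < q)%nat -> M i j = tr_inner k (A1 i) (B' j)).
  { intros i j Hi Hj. rewrite HM by assumption. unfold tr_inner, B'.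
    apply sumR_ext; intros a Ha; apply sumR_ext; intros b Hb.
    rewrite cong_diagm, (Hsupp i a b) at 1 by assumption; ring. }
  assert (Htrace : forall j, (j < q)%nat -> sumR p (fun i => M i j) = sumR k (fun a => B' j a a)).
  { intros j Hj.
    rewrite (sumR_ext _ _ (fun i => tr_inner k (A1 i) (B' j))) by (intros; apply HM'; auto).
    rewrite tr_inner_msum, tr_inner_diag by exact Hoff.
    apply sumR_ext; intros a Ha. unfold B'. rewrite cong_diagm by assumption.
    fold (w a). destruct (Hw a Ha) as [E|E]; rewrite E; ring. }
  exists A1, B'. split; [|split].
  - split; [exact HA|split; [exact HB'|exact HM']].
  - intros i a b Hi Ha Hb. apply psd_entry_le with k; auto.
    + pose proof (psd_diag_le_msum p k A1 i a HA Hi Ha). destruct (Hw a Ha); unfold w in *; lra.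
    + pose proof (psd_diag_le_msum p k A1 i b HA Hi Hb). destruct (Hw b Hb); unfold w in *; lra.
  - intros j a b Hj Ha Hb. apply psd_entry_le with k; auto; rewrite Htrace by exact Hj;
      apply (sumR_term_le k (fun a => B' j a a)); auto;
      intros; apply psd_diag_nonneg with k; auto.
Qed.

Definition pad (r : nat) (X : Mat) : Mat :=
  fun a b => if (Nat.ltb a r && Nat.ltb b r)%bool then X a b else 0.

Lemma pad_in r X a b : (a < r)%nat -> (b < r)%nat -> pad r X a b = X a b.
Proof.
  intros Ha Hb. unfold pad.
  rewrite (proj2 (Nat.ltb_lt a r) Ha), (proj2 (Nat.ltb_lt b r) Hb); reflexivity.
Qed.

Lemma pad_out r X a b : (r <= a \/ r <= b)%nat -> pad r X a b = 0.
Proof.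
  intros H. unfold pad.
  destruct (Nat.ltb_spec a r), (Nat.ltb_spec b r); simpl; auto; lia.
Qed.

Lemma psd_pad r k X : (r <= k)%nat -> is_psd r X -> is_psd k (pad r X).
Proof.
  intros Hr [Hs Hq]. split.
  - intros a b Ha Hb. destruct (Nat.lt_ge_cases a r), (Nat.lt_ge_cases b r).
    + rewrite !pad_in by assumption. auto.
    + rewrite !pad_out by lia. reflexivity.
    + rewrite !pad_out by lia. reflexivity.
    + rewrite !pad_out by lia. reflexivity.
  - intros x. rewrite (sumR_trunc2 r k); [|exact Hr|].
    + rewrite (sumR_ext _ _ (fun a => sumR r (fun b => x a * X a b * x b))); [apply Hq|].
      intros; apply sumR_ext; intros; rewrite pad_in; auto.
    + intros a b _ _ H; rewrite pad_out by exact H; ring.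
Qed.

Lemma tr_inner_pad r k X Y : (r <= k)%nat -> tr_inner k (pad r X) (pad r Y) = tr_inner r X Y.
Proof.
  intros Hr. unfold tr_inner.
  rewrite (sumR_trunc2 r k); [|exact Hr|].
  - apply sumR_ext; intros; apply sumR_ext; intros; rewrite !pad_in; auto.
  - intros a b _ _ H; rewrite (pad_out r X) by exact H; ring.
Qed.

Lemma has_psd_factorization_le p q r k M : (r <= k)%nat ->
  has_psd_factorization p q r M -> has_psd_factorization p q k M.
Proof.
  intros Hr [A [B [HA [HB HM]]]]. exists (fun i => pad r (A i)), (fun j => pad r (B j)).
  split; [|split].
  - intros; apply psd_pad; auto.
  - intros; apply psd_pad; auto.
  - intros; rewrite tr_inner_pad; auto.
Qed.

Lemma psd_rank_le p q k M : has_psd_factorization p q k M ->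
  exists r, is_psd_rank p q M r /\ (r <= k)%nat.
Proof.
  intros Hk.
  destruct (dec_inh_nat_subset_has_unique_least_element (fun r => has_psd_factorization p q r M))
    as [r [[Hr Hmin] _]].
  - intros n. destruct (excluded_middle_informative (has_psd_factorization p q n M)); auto.
  - exists k; exact Hk.
  - exists r. split; [split|]; auto.
Qed.

Lemma Un_cv_const c : Un_cv (fun _ => c) c.
Proof. intros eps Heps. exists 0%nat. intros. unfold Rdist. rewrite Rminus_diag, Rabs_R0. exact Heps. Qed.

Lemma Un_cv_sumR n (f : nat -> nat -> R) (l : nat -> R) :
  (forall i, (i < n)%nat -> Un_cv (fun m => f m i) (l i)) ->
  Un_cv (fun m => sumR n (f m)) (sumR n l).
Proof.
  induction n as [|n IH]; intros H; simpl.
  - apply Un_cv_const.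
  - apply CV_plus; [apply IH; intros; apply H|apply H]; lia.
Qed.

Lemma Un_cv_tr_inner k (X Y : nat -> Mat) (LX LY : Mat) :
  (forall a b, (a < k)%nat -> (b < k)%nat -> Un_cv (fun n => X n a b) (LX a b)) ->
  (forall a b, (a < k)%nat -> (b < k)%nat -> Un_cv (fun n => Y n a b) (LY a b)) ->
  Un_cv (fun n => tr_inner k (X n) (Y n)) (tr_inner k LX LY).
Proof.
  intros HX HY. unfold tr_inner.
  apply (Un_cv_sumR k (fun n a => sumR k (fun b => X n a b * Y n b a))); intros a Ha.
  apply (Un_cv_sumR k (fun n b => X n a b * Y n b a)); intros b Hb.
  apply CV_mult; [apply HX|apply HY]; assumption.
Qed.

Lemma psd_closed k (X : nat -> Mat) (L : Mat) : (forall n, is_psd k (X n)) ->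
  (forall a b, (a < k)%nat -> (b < k)%nat -> Un_cv (fun n => X n a b) (L a b)) ->
  is_psd k L.
Proof.
  intros HX HL. split.
  - intros a b Ha Hb. apply (UL_sequence (fun n => X n a b)); [apply HL; assumption|].
    apply (Un_cv_ext (fun n => X n b a)); [|apply HL; assumption].
    intros n. symmetry. apply (HX n); assumption.
  - intros x. apply Rle_cv_lim with (Un := fun _ => 0) (Vn := fun n => qf k (X n) x).
    + intros n. apply (HX n).
    + apply Un_cv_const.
    + unfold qf.
      apply (Un_cv_sumR k (fun n a => sumR k (fun b => x a * X n a b * x b))); intros a Ha.
      apply (Un_cv_sumR k (fun n b => x a * X n a b * x b)); intros b Hb.
      apply CV_mult; [apply CV_mult; [apply Un_cv_const|apply HL; assumption]|apply Un_cv_const].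
Qed.

Definition strictly_increasing (phi : nat -> nat) : Prop :=
  forall n m, (n < m)%nat -> (phi n < phi m)%nat.

Lemma strictly_increasing_S phi :
  (forall n, (phi n < phi (S n))%nat) -> strictly_increasing phi.
Proof.
  intros H n m Hnm. induction Hnm; [apply H|]. specialize (H m). lia.
Qed.

Lemma strictly_increasing_ge phi : strictly_increasing phi -> forall n, (n <= phi n)%nat.
Proof.
  intros H n. induction n; [lia|]. specialize (H n (S n) (Nat.lt_succ_diag_r n)). lia.
Qed.

Lemma strictly_increasing_comp f g :
  strictly_increasing f -> strictly_increasing g -> strictly_increasing (fun n => f (g n)).
Proof. intros Hf Hg n m H. apply Hf, Hg, H. Qed.

Lemma Un_cv_subseq u l phi :
  Un_cv u l -> strictly_increasing phi -> Un_cv (fun n => u (phi n)) l.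
Proof.
  intros Hu Hphi eps Heps. destruct (Hu eps Heps) as [N HN]. exists N. intros n Hn.
  apply HN. pose proof (strictly_increasing_ge phi Hphi n). lia.
Qed.

(* The subsequence is extracted from a cluster value [l] (Bolzano-Weierstrass),
   choosing [phi (S n)] beyond [phi n] within [1/(n+2)] of [l]. *)
Lemma bounded_cv_subseq u C : (forall n, Rabs (u n) <= C) ->
  exists phi l, strictly_increasing phi /\ Un_cv (fun n => u (phi n)) l.
Proof.
  intros Hb.
  destruct (Bolzano_Weierstrass u (fun c => -C <= c <= C) (compact_P3 (-C) C)) as [l Hl].
  { intros n. specialize (Hb n). unfold Rabs in Hb. destruct (Rcase_abs (u n)); lra. }
  assert (Hnear : forall Nn : nat * nat, exists p,
            (fst Nn <= p)%nat /\ Rabs (u p - l) < / INR (S (snd Nn))).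
  { intros [N n]. assert (Hpos : 0 < / INR (S n)) by (apply Rinv_0_lt_compat, lt_0_INR; lia).
    destruct (Hl (disc l (mkposreal _ Hpos)) N) as [p [HNp Hp]].
    - exists (mkposreal _ Hpos). intros x Hx; exact Hx.
    - exists p. split; assumption. }
  destruct (choice _ Hnear) as [g Hg].
  set (phi := fix phi n :=
         match n with O => g (0%nat, 0%nat) | S n' => g (S (phi n'), S n') end).
  assert (Hphi : forall n, Rabs (u (phi n) - l) < / INR (S n)) by (intros [|n]; apply Hg).
  exists phi, l. split.
  - apply strictly_increasing_S. intros n. apply (Hg (S (phi n), S n)).
  - intros eps Heps. destruct (archimed_cor1 eps Heps) as [N [HN HN0]]. exists N.
    intros n Hn. unfold Rdist. specialize (Hphi n).
    assert (/ INR (S n) <= / INR N)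
      by (apply Rinv_le_contravar; [apply lt_0_INR; lia|apply le_INR; lia]).
    lra.
Qed.

Lemma bounded_cv_subseq_list {X : Type} (L : list X) (u : nat -> X -> R) :
  (forall x, In x L -> exists C, forall n, Rabs (u n x) <= C) ->
  exists phi (lim : X -> R), strictly_increasing phi /\
    forall x, In x L -> Un_cv (fun n => u (phi n) x) (lim x).
Proof.
  revert u. induction L as [|x0 L IH]; intros u Hb.
  - exists (fun n => n), (fun _ => 0). split; [intros n m H; exact H|]. intros x [].
  - destruct (IH u) as [phi [lim [Hphi Hlim]]]; [intros; apply Hb; right; assumption|].
    destruct (Hb x0 (or_introl eq_refl)) as [C HC].
    destruct (bounded_cv_subseq (fun n => u (phi n) x0) C) as [psi [l0 [Hpsi Hl0]]];
      [intros; apply HC|].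
    exists (fun n => phi (psi n)),
      (fun x => if excluded_middle_informative (x = x0) then l0 else lim x).
    split; [apply strictly_increasing_comp; assumption|].
    intros x Hx. destruct (excluded_middle_informative (x = x0)) as [->|Hne]; [exact Hl0|].
    destruct Hx as [Heq|Hx]; [congruence|].
    apply (Un_cv_subseq (fun n => u (phi n) x)); auto.
Qed.

Lemma bounded_cv_subseq_mats p k (F : nat -> nat -> Mat) :
  (forall i, (i < p)%nat -> exists C,
     forall n a b, (a < k)%nat -> (b < k)%nat -> Rabs (F n i a b) <= C) ->
  exists phi (L : nat -> Mat), strictly_increasing phi /\
    forall i a b, (i < p)%nat -> (a < k)%nat -> (b < k)%nat ->
      Un_cv (fun n => F (phi n) i a b) (L i a b).
Proof.
  intros Hb.
  set (idx := list_prod (list_prod (seq 0 p) (seq 0 k)) (seq 0 k)).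
  assert (Hidx : forall i a b, In (i, a, b) idx <-> (i < p /\ a < k /\ b < k)%nat).
  { intros. unfold idx. rewrite !in_prod_iff, !in_seq. lia. }
  destruct (bounded_cv_subseq_list idx (fun n '(i, a, b) => F n i a b)) as [phi [lim [Hphi Hlim]]].
  - intros [[i a] b] Hx. apply Hidx in Hx as (Hi & Ha & Hab).
    destruct (Hb i Hi) as [C HC]. exists C. intros n. apply HC; assumption.
  - exists phi, (fun i a b => lim (i, a, b)). split; [exact Hphi|].
    intros i a b Hi Ha Hab. apply (Hlim (i, a, b)), Hidx. auto.
Qed.

Lemma has_psd_factorization_of_limit p q k (Ms : nat -> Mat) (M : Mat) (A B : nat -> nat -> Mat) :
  (forall n, bounded_psd_factorization p q k (Ms n) (A n) (B n)) ->
  (forall i j, (i < p)%nat -> (j < q)%nat -> Un_cv (fun n => Ms n i j) (M i j)) ->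
  has_psd_factorization p q k M.
Proof.
  intros HF Hcv.
  destruct (bounded_cv_subseq_mats p k A) as [phi [LA [Hphi HA]]].
  { intros i Hi. exists 1. intros n a b Ha Hb. apply (HF n); assumption. }
  destruct (bounded_cv_subseq_mats q k (fun n => B (phi n))) as [psi [LB [Hpsi HB]]].
  { intros j Hj.
    destruct (maj_by_pos (fun n => sumR p (fun i => Ms (phi n) i j))) as [C [_ HC]].
    { exists (sumR p (fun i => M i j)).
      apply (Un_cv_sumR p (fun n i => Ms (phi n) i j)). intros i Hi.
      apply (Un_cv_subseq (fun n => Ms n i j)); auto. }
    exists C. intros n a b Ha Hb.
    eapply Rle_trans; [apply (HF (phi n)); assumption|].
    eapply Rle_trans; [apply Rle_abs|apply HC]. }
  set (chi := fun n => phi (psi n)).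
  assert (Hchi : strictly_increasing chi) by exact (strictly_increasing_comp phi psi Hphi Hpsi).
  assert (HA' : forall i a b, (i < p)%nat -> (a < k)%nat -> (b < k)%nat ->
            Un_cv (fun n => A (chi n) i a b) (LA i a b))
    by (intros; apply (Un_cv_subseq (fun n => A (phi n) i a b)); auto).
  exists LA, LB. split; [|split].
  - intros i Hi. apply (psd_closed k (fun n => A (chi n) i)); [|auto].
    intros n. apply (HF (chi n)), Hi.
  - intros j Hj. apply (psd_closed k (fun n => B (chi n) j)); [|auto].
    intros n. apply (HF (chi n)), Hj.
  - intros i j Hi Hj. apply (UL_sequence (fun n => Ms (chi n) i j)).
    + apply (Un_cv_subseq (fun n => Ms n i j)); auto.
    + apply (Un_cv_ext (fun n => tr_inner k (A (chi n) i) (B (chi n) j))).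
      * intros n. symmetry. apply (HF (chi n)); assumption.
      * apply Un_cv_tr_inner; auto.
Qed.

Theorem theorem2p9 (p q k : nat) (Ms : nat -> Mat) (M : Mat) :
  (forall n, nonneg_mat p q (Ms n)) ->
  nonneg_mat p q M ->
  (forall i j, (i < p)%nat -> (j < q)%nat ->
     Un_cv (fun n => Ms n i j) (M i j)) ->
  (forall n, exists r, is_psd_rank p q (Ms n) r /\ (r <= k)%nat) ->
  exists r, is_psd_rank p q M r /\ (r <= k)%nat.
Proof.
  intros _ _ Hcv Hrk.
  destruct (choice (fun n AB => bounded_psd_factorization p q k (Ms n) (fst AB) (snd AB)))
    as [F HF].
  { intros n. destruct (Hrk n) as [r [[Hr _] Hrk']].
    destruct (has_psd_factorization_le p q r k (Ms n) Hrk' Hr) as [A [B Hf]].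
    destruct (exists_bounded_psd_factorization p q k (Ms n) A B Hf) as [A' [B' H]].
    exists (A', B'). exact H. }
  apply psd_rank_le.
  apply (has_psd_factorization_of_limit p q k Ms M (fun n => fst (F n)) (fun n => snd (F n)));
    assumption.
Qed.
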